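(* For every integer $n\ge1$, the proportion $P(0,n)$ of invertible matrices in $(\mathbb F_2)^{n\times n}$ satisfies $$P(0,n)>2^{-8/7}e^{-19/42}.$$
   Context: $P(d,n)$ denotes the proportion of matrices in $(\mathbb F_2)^{n\times n}$ whose null space has dimension $d$. *)

From HB Require Import structures.
From mathcomp Require Import all_boot all_order all_algebra.
From mathcomp Require Import all_classical all_reals all_analysis.
Set Implicit Arguments. Unset Strict Implicit. Unset Printing Implicit Defensive.
Import Order.TTheory GRing.Theory Num.Theory.
Local Open Scope ring_scope.

(* Null space of A : 'M_n (column vectors x with A x = 0) is the row kernel
   of A^T; its dimension is \rank (kermx A^T). *)
Definition nullity (n : nat) (A : 'M['F_2]_n) : nat := \rank (kermx A^T).

Definition Pprop (R : realType) (d n : nat) : R :=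
  (#|[set A : 'M['F_2]_n | nullity A == d]|%:R) / (#|{: 'M['F_2]_n}|%:R).

From HB Require Import structures.
From mathcomp Require Import all_boot all_order all_algebra.
From mathcomp Require Import all_classical all_reals all_analysis.
From mathcomp Require Import zify ring lra.
Set Implicit Arguments. Unset Strict Implicit. Unset Printing Implicit Defensive.
Import Order.TTheory GRing.Theory Num.Theory.
Local Open Scope ring_scope.

(* Counting GL_n(F_2) gives P(0,n) = (1/2; 1/2)_n = prod_(i=1..n) (1 - 2^-i).
   This product decreases with n, and the Weierstrass inequality
   prod (1 - a_i) >= 1 - sum a_i, applied to the factors beyond the fifth, shows
   that every term is at least (1/2; 1/2)_5 (1 - 2^-5) = 3*7*15*31*31 / 2^20,
   about 0.28869. The constant 2^(-8/7) e^(-19/42), about 0.28809, is smaller: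
   after raising both sides to the 42nd power this follows from e > 685/252 and
   an integer inequality. *)

Definition qpoch (R : pzRingType) (q : R) (n : nat) : R :=
  \prod_(i < n) (1 - q ^+ i.+1).

Lemma qpochS (R : pzRingType) (q : R) n :
  qpoch q n.+1 = qpoch q n * (1 - q ^+ n.+1).
Proof. by rewrite /qpoch big_ord_recr. Qed.

Lemma qpochD (R : pzRingType) (q : R) m k :
  qpoch q (m + k) = qpoch q m * \prod_(i < k) (1 - q ^+ (m + i).+1).
Proof. by rewrite /qpoch big_split_ord. Qed.

Lemma card_ratio_qpoch (R : numFieldType) (q n : nat) : (0 < q)%N ->
  (q ^ 'C(n, 2) * \prod_(1 <= i < n.+1) (q ^ i - 1))%N%:R / (q ^ (n * n))%N%:R
  = qpoch (q%:R^-1 : R) n.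
Proof.
move=> q_gt0; elim: n => [|n IHn].
  by rewrite /qpoch big_ord0 big_geq // bin0n expn0 mul1n divr1.
have qX_neq0 k : ((q ^ k)%N%:R : R) != 0.
  by rewrite pnatr_eq0 expn_eq0 negb_and -lt0n q_gt0.
have -> : (n.+1 * n.+1 = n * n + n + n.+1)%N by lia.
rewrite qpochS -IHn binS bin1 big_nat_recr //=.
rewrite !expnD !natrM natrB ?expn_gt0 ?q_gt0 // exprVn -natrX.
by field; rewrite !qX_neq0.
Qed.

Section QPochMonotone.
Variables (R : realFieldType) (q : R).
Hypotheses (q_ge0 : 0 <= q) (q_le1 : q <= 1).

Lemma exprn_ge0_le1 k : 0 <= q ^+ k <= 1.
Proof. by rewrite exprn_ge0 ?exprn_ile1. Qed.

Lemma qpoch_ge0 n : 0 <= qpoch q n.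
Proof.
elim: n => [|n IHn]; first by rewrite /qpoch big_ord0.
by rewrite qpochS mulr_ge0 // subr_ge0; case/andP: (exprn_ge0_le1 n.+1).
Qed.

Lemma qpoch_nonincreasing m n : (m <= n)%N -> qpoch q n <= qpoch q m.
Proof.
move/subnKC <-; elim: (n - m)%N => [|k IHk]; first by rewrite addn0.
rewrite addnS qpochS; apply: le_trans IHk.
case/andP: (exprn_ge0_le1 (m + k).+1) => qX_ge0 _.
by rewrite ler_piMr ?qpoch_ge0 // lerBlDr lerDl.
Qed.

End QPochMonotone.

Lemma sum_expr_le_inv (R : realFieldType) (q : R) k :
  0 <= q < 1 -> \sum_(i < k) q ^+ i <= (1 - q)^-1.
Proof.
case/andP=> q_ge0 q_lt1; have q1_gt0 : 0 < 1 - q by rewrite subr_gt0.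
rewrite -(ler_pM2l q1_gt0) mulfV ?gt_eqF // -opprB mulNr -subrX1 opprB.
by rewrite lerBlDr lerDl exprn_ge0.
Qed.

Lemma weierstrass_prod_ge (R : realDomainType) (I : Type) (r : seq I) (a : I -> R) :
  (forall i, 0 <= a i <= 1) -> 1 - \sum_(i <- r) a i <= \prod_(i <- r) (1 - a i).
Proof.
move=> a01; elim: r => [|i r IHr]; first by rewrite !big_nil subr0.
rewrite !big_cons; case/andP: (a01 i) => a_ge0 a_le1.
have sum_ge0 : 0 <= \sum_(j <- r) a j.
  by rewrite sumr_ge0 // => j _; case/andP: (a01 j).
have a1_ge0 : 0 <= 1 - a i by rewrite subr_ge0.
have := ler_wpM2l a1_ge0 IHr.
nra.
Qed.

Lemma qpoch_tail_ge (R : realFieldType) (q : R) m k : 0 <= q < 1 ->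
  qpoch q m * (1 - q ^+ m.+1 / (1 - q)) <= qpoch q (m + k).
Proof.
move=> /[dup] q01 /andP[q_ge0 q_lt1]; have q_le1 := ltW q_lt1.
rewrite qpochD ler_wpM2l ?qpoch_ge0 //.
apply/le_trans/(weierstrass_prod_ge _
  (fun i : 'I_k => exprn_ge0_le1 q_ge0 q_le1 (m + i).+1)).
rewrite lerD2l lerN2 /=.
under eq_bigr do rewrite -addSn exprD.
by rewrite -mulr_sumr ler_wpM2l ?exprn_ge0 ?sum_expr_le_inv.
Qed.

Lemma qpoch_ge (R : realFieldType) (q : R) m n : 0 <= q < 1 ->
  qpoch q m * (1 - q ^+ m.+1 / (1 - q)) <= qpoch q n.
Proof.
move=> /[dup] q01 /andP[q_ge0 q_lt1]; have q_le1 := ltW q_lt1.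
have [/subnKC <-|/ltnW n_le_m] := leqP m n; first exact: qpoch_tail_ge.
apply: le_trans (qpoch_nonincreasing q_ge0 q_le1 n_le_m).
rewrite ler_piMr ?qpoch_ge0 // lerBlDr lerDl divr_ge0 ?exprn_ge0 //.
by rewrite subr_ge0.
Qed.

Lemma qpoch_half_ge (R : realFieldType) n :
  3 * 7 * 15 * 31 * 31 / 2 ^+ 20 <= qpoch (2^-1 : R) n.
Proof.
have -> : 3 * 7 * 15 * 31 * 31 / 2 ^+ 20
          = qpoch (2^-1 : R) 5 * (1 - 2^-1 ^+ 6 / (1 - 2^-1)).
  by rewrite /qpoch !big_ord_recr big_ord0 /=; field.
by apply: qpoch_ge; rewrite invr_ge0 ler0n invf_lt1 ?ltr1n.
Qed.

Lemma expR_ge_partial_sum (R : realType) (x : R) m : 0 <= x ->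
  \sum_(i < m) x ^+ i / i`!%:R <= expR x.
Proof.
move=> x_ge0; have -> : \sum_(i < m) x ^+ i / i`!%:R = series (exp_coeff x) m.
  by rewrite seriesEord.
apply: nondecreasing_cvgn_le; last exact: is_cvg_series_exp_coeff.
by apply: nondecreasing_series => i _ _; rewrite divr_ge0 ?exprn_ge0.
Qed.

Lemma expR1_gt (R : realType) : 685 / 252 < expR (1 : R).
Proof.
apply: lt_le_trans (expR_ge_partial_sum 9 ler01).
rewrite !big_ord_recr big_ord0 /= !expr1n !factS fact0 !natrM.
lra.
Qed.

Lemma ltr_frac_nat (R : numFieldType) (a b c d : nat) : (0 < b)%N -> (0 < d)%N ->
  (a * d < c * b)%N -> a%:R / b%:R < c%:R / d%:R :> R.
Proof.
move=> b_gt0 d_gt0 lt_ad_cb.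
by rewrite ltr_pdivrMr ?ltr0n // mulrAC ltr_pdivlMr ?ltr0n // -!natrM ltr_nat.
Qed.

(* Stated over variables so that no large numeral is ever cast (and thus
   evaluated in unary) inside the reals; [lia] settles the instance. *)
Lemma ltr_inv_frac_pow_nat (R : numFieldType) (p a b c d i j k : nat) :
  (0 < p)%N -> (0 < a)%N -> (0 < b)%N -> (0 < d)%N ->
  (b ^ j * d ^ k < c ^ k * (p ^ i * a ^ j))%N ->
  (p%:R ^+ i * (a%:R / b%:R) ^+ j)^-1 < (c%:R / d%:R) ^+ k :> R.
Proof.
move=> p_gt0 a_gt0 b_gt0 d_gt0 lt_nat.
rewrite !expr_div_n mulrA invf_div -!natrX -natrM.
by apply: ltr_frac_nat; rewrite // ?muln_gt0 !expn_gt0 ?p_gt0 ?a_gt0 ?d_gt0.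
Qed.

Lemma powR_mul_expR_lt (R : realType) :
  (2 : R) `^ (- (8%:R / 7%:R)) * expR (- (19%:R / 42%:R))
  < 3 * 7 * 15 * 31 * 31 / 2 ^+ 20.
Proof.
rewrite -(@ltr_pXn2r _ 42) //
  ?nnegrE ?mulr_ge0 ?powR_ge0 ?expR_ge0 ?divr_ge0 ?exprn_ge0 //.
have pow_eq : (2 : R) `^ (- (8%:R / 7%:R)) ^+ 42 = (2 ^+ 48)^-1.
  rewrite -powR_mulrn ?powR_ge0 // -powRrM.
  have -> : - (8%:R / 7%:R) * 42%:R = - 48%:R :> R by lra.
  by rewrite powR_invn.
have exp_eq : expR (- (19%:R / 42%:R)) ^+ 42 = (expR 1 ^+ 19)^-1 :> R.
  rewrite -expRM_natr.
  have -> : - (19%:R / 42%:R) * 42%:R = - (1 * 19%:R) :> R by lra.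
  by rewrite expRN expRM_natr.
rewrite exprMn pow_eq exp_eq -invfM.
apply: (@lt_trans _ _ ((2 ^+ 48 * (685 / 252) ^+ 19)^-1)).
  have frac_gt0 : (0 : R) < 685 / 252 by rewrite divr_gt0 ?ltr0n.
  rewrite ltf_pV2 ?posrE; last 2 first.
  - by rewrite mulr_gt0 ?exprn_gt0 ?expR_gt0.
  - by rewrite mulr_gt0 ?exprn_gt0.
  rewrite ltr_pM2l ?exprn_gt0 ?ltr0n //.
  by rewrite ltr_pXn2r ?nnegrE ?(ltW frac_gt0) ?expR_ge0 ?expR1_gt.
have num_eq : (3 * 7 * 15 * 31 * 31)%N%:R = 3 * 7 * 15 * 31 * 31 :> R.
  by rewrite !natrM.
have den_eq : (2 ^ 20)%N%:R = 2 ^+ 20 :> R by rewrite natrX.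
by rewrite -num_eq -den_eq; apply: ltr_inv_frac_pow_nat; lia.
Qed.

Lemma card_unitmx (F : finFieldType) n :
  #|[set A : 'M[F]_n.+1 | A \in unitmx]| =
  (#|F| ^ 'C(n.+1, 2) * \prod_(1 <= i < n.+2) (#|F| ^ i - 1))%N.
Proof.
rewrite -card_GL // cardsT card_sub; apply: eq_card => A.
by rewrite !inE.
Qed.

Lemma nullity_eq0 n (A : 'M['F_2]_n) : (nullity A == 0)%N = (A \in unitmx).
Proof.
rewrite /nullity mxrank_ker mxrank_tr subn_eq0.
by rewrite -row_free_unit /row_free eqn_leq rank_leq_row.
Qed.

Lemma Pprop0E (R : realType) n : Pprop R 0 n.+1 = qpoch (2^-1 : R) n.+1.
Proof.
rewrite /Pprop.
have -> : [set A : 'M['F_2]_n.+1 | nullity A == 0%N] = [set A | A \in unitmx].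
  by apply/setP => A; rewrite !inE nullity_eq0.
by rewrite card_unitmx card_mx card_Fp // -card_ratio_qpoch.
Qed.

Theorem mainTheorem11 (R : realType) (n : nat) (hn : (1 <= n)%N) :
  (2 : R) `^ (- (8%:R / 7%:R)) * expR (- (19%:R / 42%:R)) < Pprop R 0 n.
Proof.
case: n hn => // n _.
rewrite Pprop0E.
exact: lt_le_trans (powR_mul_expR_lt R) (qpoch_half_ge R n.+1).
Qed.
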